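(* Let $A\in\mathbb{R}^{m\times N}$ with $N=pn$, let $\mathbf{x}\in\mathbb{R}^N$ be arbitrary, let $k\in\{1,\dots,p\}$, let $\phi_k(\mathbf{x})=\inf_{\mathbf{z}\in\mathbb{R}^N,\lVert\mathbf{z}\rVert_{2,0}=k}\lVert\mathbf{x}-\mathbf{z}\rVert_{2,1}$, and let $\mathbf{y}=A\mathbf{x}+\boldsymbol{\epsilon}$. For any $q\in(1,\infty]$: 1) If $\lVert\boldsymbol{\epsilon}\rVert_2\le\zeta$, then the solution $\hat{\mathbf{x}}$ of the block basis pursuit $\min_{\mathbf{z}}\lVert\mathbf{z}\rVert_{2,1}$ s.t. $\lVert\mathbf{y}-A\mathbf{z}\rVert_2\le\zeta$ obeys $$\lVert\hat{\mathbf{x}}-\mathbf{x}\rVert_{2,q}\le\frac{2\zeta}{\beta_{q,4^{\frac{q}{q-1}}k}(A)}+k^{1/q-1}\phi_k(\mathbf{x}),\qquad \lVert\hat{\mathbf{x}}-\mathbf{x}\rVert_{2,1}\le\frac{4k^{1-1/q}\zeta}{\beta_{q,4^{\frac{q}{q-1}}k}(A)}+4\phi_k(\mathbf{x}).$$ 2) If $\lVert A^T\boldsymbol{\epsilon}\rVert_{2,\infty}\le\mu$, then the solution $\hat{\mathbf{x}}$ of the block Dantzig selector $\min_{\mathbf{z}}\lVert\mathbf{z}\rVert_{2,1}$ s.t. $\lVert A^T(\mathbf{y}-A\mathbf{z})\rVert_{2,\infty}\le\mu$ obeys $$\lVert\hat{\mathbf{x}}-\mathbf{x}\rVert_{2,q}\le\frac{8k^{1-1/q}}{\beta^2_{q,4^{\frac{q}{q-1}}k}(A)}\mu+k^{1/q-1}\phi_k(\mathbf{x}),\qquad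 \lVert\hat{\mathbf{x}}-\mathbf{x}\rVert_{2,1}\le\frac{16k^{2-2/q}}{\beta^2_{q,4^{\frac{q}{q-1}}k}(A)}\mu+4\phi_k(\mathbf{x}).$$ 3) If $\lVert A^T\boldsymbol{\epsilon}\rVert_{2,\infty}\le\kappa\mu$ for some $\kappa\in(0,1)$, then the solution $\hat{\mathbf{x}}$ of the group lasso $\min_{\mathbf{z}}\frac12\lVert\mathbf{y}-A\mathbf{z}\rVert_2^2+\mu\lVert\mathbf{z}\rVert_{2,1}$ obeys $$\lVert\hat{\mathbf{x}}-\mathbf{x}\rVert_{2,q}\le\frac{1+\kappa}{1-\kappa}\cdot\frac{4k^{1-1/q}}{\beta^2_{q,(\frac{4}{1-\kappa})^{\frac{q}{q-1}}k}(A)}\mu+k^{1/q-1}\phi_k(\mathbf{x}),$$ $$\lVert\hat{\mathbf{x}}-\mathbf{x}\rVert_{2,1}\le\frac{1+\kappa}{(1-\kappa)^2}\cdot\frac{8k^{2-2/q}}{\beta^2_{q,(\frac{4}{1-\kappa})^{\frac{q}{q-1}}k}(A)}\mu+\frac{4}{1-\kappa}\phi_k(\mathbf{x}).$$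
   Context: Every $\mathbf{x}\in\mathbb{R}^N$ is partitioned into $p$ consecutive blocks of length $n$: $\mathbf{x}=[\mathbf{x}_1^T,\dots,\mathbf{x}_p^T]^T$, $\mathbf{x}_i\in\mathbb{R}^n$. Mixed norms: $\lVert\mathbf{x}\rVert_{2,0}=\#\{i:\mathbf{x}_i\ne\mathbf{0}\}$, $\lVert\mathbf{x}\rVert_{2,q}=(\sum_{i=1}^p\lVert\mathbf{x}_i\rVert_2^q)^{1/q}$ for $0<q<\infty$, $\lVert\mathbf{x}\rVert_{2,\infty}=\max_i\lVert\mathbf{x}_i\rVert_2$. For nonzero $\mathbf{x}$ and $q\in(1,\infty)$, $k_q(\mathbf{x})=\left(\lVert\mathbf{x}\rVert_{2,1}/\lVert\mathbf{x}\rVert_{2,q}\right)^{q/(q-1)}$, and $k_\infty(\mathbf{x})=\lVert\mathbf{x}\rVert_{2,1}/\lVert\mathbf{x}\rVert_{2,\infty}$. For $q\in(1,\infty]$ and real $s\ge1$, $\beta_{q,s}(A)=\min_{\mathbf{z}\ne\mathbf{0},\,k_q(\mathbf{z})\le s}\lVert A\mathbf{z}\rVert_2/\lVert\mathbf{z}\rVert_{2,q}$ (the paper defines it for $s\in[1,p]$; for $s\ge p$ the constraint is vacuous since $k_q\le p$). For $q=\infty$, $q/(q-1)$ is read as $1$ and $1/q$ as $0$. The parameters $\zeta\ge0$, $\mu>0$ are given; bounds are understood as $+\infty$ when the relevant $\beta$ is $0$. *)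

From HB Require Import structures.
From mathcomp Require Import all_boot all_order all_algebra.
From mathcomp Require Import all_classical all_reals.
From mathcomp Require Import exp.
From mathcomp Require Import zify.
Set Implicit Arguments. Unset Strict Implicit. Unset Printing Implicit Defensive.
Import Order.TTheory GRing.Theory Num.Theory.
Local Open Scope ring_scope.

(* Index of entry j of block i in R^(p*n) : block i occupies the consecutive
   coordinates i*n, ..., i*n + n - 1. *)
Lemma bidx_lt (p n : nat) (i : 'I_p) (j : 'I_n) : (i * n + j < p * n)%N.
Proof. have := ltn_ord i; have := ltn_ord j; nia. Qed.

Definition bidx (p n : nat) (i : 'I_p) (j : 'I_n) : 'I_(p * n) :=
  Ordinal (bidx_lt i j).

Section MixedNorms.
Variables (R : realType) (p n : nat).
Implicit Types (x z : 'cV[R]_(p * n)).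

Definition blk x (i : 'I_p) : 'rV[R]_n := \row_(j < n) x (bidx i j) 0.

Definition bnorm x (i : 'I_p) : R := Num.sqrt (\sum_(j < n) x (bidx i j) 0 ^+ 2).

Definition mnorm0 x : nat := #|[pred i : 'I_p | blk x i != 0]|.

Definition mnorm1 x : R := \sum_(i < p) bnorm x i.

Definition mnorminf x : R := \big[Num.max/0]_(i < p) bnorm x i.

(* ||x||_{2,q} for q in (0,oo] (q : \bar R; q = -oo is meaningless, set to 0) *)
Definition mnorm (q : \bar R) x : R :=
  match q with
  | r%:E => powR (\sum_(i < p) powR (bnorm x i) r) r^-1
  | +oo%E => mnorminf x
  | -oo%E => 0
  end.

(* exponent q/(q-1), read as 1 when q = oo *)
Definition qcexp (q : \bar R) : R :=
  match q with r%:E => r / (r - 1) | _ => 1 end.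

(* 1/q, read as 0 when q = oo *)
Definition qinvexp (q : \bar R) : R :=
  match q with r%:E => r^-1 | _ => 0 end.

(* k_q(x) = (||x||_{2,1} / ||x||_{2,q})^(q/(q-1)); for q = oo this is
   ||x||_{2,1}/||x||_{2,oo} since powR t 1 = t for t >= 0 *)
Definition kq (q : \bar R) x : R := powR (mnorm1 x / mnorm q x) (qcexp q).

End MixedNorms.

Definition l2norm (R : realType) (m : nat) (v : 'cV[R]_m) : R :=
  Num.sqrt (\sum_(i < m) v i 0 ^+ 2).

(* beta_{q,s}(A) = min_{z <> 0, k_q(z) <= s} ||Az||_2 / ||z||_{2,q}
   (stated as an infimum; the minimum is attained) *)
Definition betaqs (R : realType) (m p n : nat) (q : \bar R) (s : R)
    (A : 'M[R]_(m, p * n)) : R :=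
  inf [set l2norm (A *m z) / mnorm q z
      | z in [set z : 'cV[R]_(p * n) | z != 0 /\ kq q z <= s]]%classic.

Definition phik (R : realType) (p n : nat) (k : nat) (x : 'cV[R]_(p * n)) : R :=
  inf [set mnorm1 (x - z) | z in [set z : 'cV[R]_(p * n) | mnorm0 z = k]]%classic.

Definition bbp_solution (R : realType) (m p n : nat) (A : 'M[R]_(m, p * n))
    (y : 'cV[R]_m) (zeta : R) (xh : 'cV[R]_(p * n)) : Prop :=
  l2norm (y - A *m xh) <= zeta /\
  forall z, l2norm (y - A *m z) <= zeta -> mnorm1 xh <= mnorm1 z.

Definition bds_solution (R : realType) (m p n : nat) (A : 'M[R]_(m, p * n))
    (y : 'cV[R]_m) (mu : R) (xh : 'cV[R]_(p * n)) : Prop :=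
  mnorminf (A^T *m (y - A *m xh)) <= mu /\
  forall z, mnorminf (A^T *m (y - A *m z)) <= mu -> mnorm1 xh <= mnorm1 z.

Definition glasso_solution (R : realType) (m p n : nat) (A : 'M[R]_(m, p * n))
    (y : 'cV[R]_m) (mu : R) (xh : 'cV[R]_(p * n)) : Prop :=
  forall z, 2^-1 * l2norm (y - A *m xh) ^+ 2 + mu * mnorm1 xh
            <= 2^-1 * l2norm (y - A *m z) ^+ 2 + mu * mnorm1 z.

From HB Require Import structures.
From mathcomp Require Import all_boot all_order all_algebra.
From mathcomp Require Import all_classical all_reals.
From mathcomp Require Import exp.
From mathcomp Require Import zify ring lra.
Set Implicit Arguments. Unset Strict Implicit. Unset Printing Implicit Defensive.
Import Order.TTheory GRing.Theory Num.Theory.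
Local Open Scope ring_scope.

(* Write [h = xh - x].  Optimality of [xh] gives the cone condition
   [||x + h||_{2,1} - ||x||_{2,1} <= kappa ||h||_{2,1}], with [kappa = 0] for
   basis pursuit and the Dantzig selector (x itself is feasible) and, for the
   group lasso, as a consequence of its basic inequality.  Comparing with any
   [z] having [k] nonzero blocks, supported on [S], and using Hoelder on [S]:
     [(1 - kappa) ||h||_{2,1} <= 2 k^(1-1/q) ||h||_{2,q} + 2 ||x - z||_{2,1}].
   Either the tail term dominates, which directly gives the [phi_k] part of
   both bounds, or [||h||_{2,1} <= 4/(1-kappa) k^(1-1/q) ||h||_{2,q}], i.e.
   [k_q(h) <= (4/(1-kappa))^(q/(q-1)) k], so that
   [beta ||h||_{2,q} <= ||A h||_2].  Feasibility bounds [||A h||_2 <= 2 zeta]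
   for basis pursuit; for the other two programs
   [||A h||_2^2 = <h, A^T A h> <= ||h||_{2,1} ||A^T A h||_{2,oo}] turns this
   into a quadratic bound on [||h||_{2,q}].  Finally take the infimum over [z]. *)

Section BlockIndex.
Variables (p n : nat).

Lemma bidx_divn_lt (k : 'I_(p * n)) : (k %/ n < p)%N.
Proof.
by move: (nat_of_ord k) (ltn_ord k); case: n => [|n'] j; rewrite ?muln0 // ltn_divLR.
Qed.

Lemma bidx_modn_lt (k : 'I_(p * n)) : (k %% n < n)%N.
Proof.
by move: (nat_of_ord k) (ltn_ord k); case: n => [|n'] j; rewrite ?muln0 // ltn_mod.
Qed.

Lemma bidx_divn_modn (k : 'I_(p * n)) :
  bidx (Ordinal (bidx_divn_lt k)) (Ordinal (bidx_modn_lt k)) = k.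
Proof. by apply: val_inj; rewrite /= -divn_eq. Qed.

Lemma big_bidx (R : Type) (idx : R) (op : Monoid.com_law idx) (F : 'I_(p * n) -> R) :
  \big[op/idx]_k F k = \big[op/idx]_(i < p) \big[op/idx]_(j < n) F (bidx i j).
Proof.
rewrite pair_bigA (reindex (fun ij : 'I_p * 'I_n => bidx ij.1 ij.2)) //=.
exists (fun k => (Ordinal (bidx_divn_lt k), Ordinal (bidx_modn_lt k))).
  move=> [i j] _; congr pair; apply: val_inj => /=.
    by rewrite divnMDl ?divn_small ?addn0 //; case: j => j /=; lia.
  by rewrite modnMDl modn_small.
by move=> k _; apply: bidx_divn_modn.
Qed.

End BlockIndex.

Section RealArith.
Variable R : realFieldType.

Lemma le_of_le_add_small (a b C : R) : 0 <= C ->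
  (forall l, 0 < l -> l <= 1 -> a <= b + l * C) -> a <= b.
Proof.
move=> C_ge0 le_l; rewrite leNgt; apply/negP => b_lt_a.
have ab_gt0 : 0 < a - b by rewrite subr_gt0.
have den_gt0 : 0 < a - b + C by lra.
have l_gt0 : 0 < (a - b) / (a - b + C) by rewrite divr_gt0.
have l_le1 : (a - b) / (a - b + C) <= 1 by rewrite ler_pdivrMr // mul1r; lra.
have := le_l _ l_gt0 l_le1; rewrite mulrAC -lerBlDl ler_pdivlMr //.
by have := mulr_gt0 ab_gt0 ab_gt0; nra.
Qed.

Lemma le_div_sqr_of_quadratic (b t N M : R) : 0 < b -> 0 < t ->
  b * t <= N -> N ^+ 2 <= M * t -> t <= M / b ^+ 2.
Proof.
move=> b_gt0 t_gt0 bt_le_N N2_le.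
have bt_gt0 : 0 < b * t by rewrite mulr_gt0.
have : (b * t) ^+ 2 <= N ^+ 2 by rewrite ler_pXn2r // nnegrE ltW // (lt_le_trans bt_gt0).
rewrite ler_pdivlMr ?exprn_gt0 // -(ler_pM2r t_gt0); nra.
Qed.

(* [4/(1-kap)] is the threshold beyond which the cone inequality forces
   [c t <= d]. *)
Lemma cone_dichotomy (T t c d kap X : R) : kap < 1 -> 0 < c -> 0 <= d -> 0 <= X ->
  (1 - kap) * T <= 2 * c * t + 2 * d -> (T <= 4 / (1 - kap) * c * t -> t <= X) ->
  t <= X + c^-1 * d /\ T <= (1 - kap)^-1 * (2 * c * X) + 4 / (1 - kap) * d.
Proof.
move=> kap_lt1 c_gt0 d_ge0 X_ge0 cone small_T_t.
have kap1_gt0 : 0 < 1 - kap by rewrite subr_gt0.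
have cd_ge0 : 0 <= c^-1 * d by rewrite mulr_ge0 // invr_ge0 ltW.
have -> : (1 - kap)^-1 * (2 * c * X) + 4 / (1 - kap) * d
          = (1 - kap)^-1 * (2 * c * X + 4 * d) by ring.
rewrite ler_pdivlMl //.
have [small_T | large_T] := lerP T (4 / (1 - kap) * c * t).
  have t_le_X := small_T_t small_T.
  have := ler_wpM2l (ltW c_gt0) t_le_X; split; lra.
have ct_lt_d : c * t < d.
  have e : 4 / (1 - kap) * c * t = (1 - kap)^-1 * (4 * (c * t)) by ring.
  by rewrite e ltr_pdivrMl // in large_T; lra.
have cX_ge0 : 0 <= c * X by rewrite mulr_ge0 // ltW.
split; last by lra.
by rewrite -(ler_pM2l c_gt0) mulrDr mulrA mulfV ?gt_eqF // mul1r; lra.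
Qed.

End RealArith.

Section EuclideanNorm.
Variables (R : rcfType) (I : finType).
Implicit Types f g : I -> R.

Definition enorm f : R := Num.sqrt (\sum_i f i ^+ 2).

Lemma enorm_ge0 f : 0 <= enorm f.
Proof. exact: sqrtr_ge0. Qed.

Lemma enorm_sqr f : enorm f ^+ 2 = \sum_i f i ^+ 2.
Proof. by rewrite sqr_sqrtr // sumr_ge0 // => i _; rewrite sqr_ge0. Qed.

Lemma enorm_eq0 f : enorm f = 0 -> forall i, f i = 0.
Proof.
move=> f0 i; have /eqP : \sum_i f i ^+ 2 = 0 by rewrite -enorm_sqr f0 expr0n.
rewrite psumr_eq0 => [/allP /(_ i (mem_index_enum i))|j _]; last exact: sqr_ge0.
by rewrite /= sqrf_eq0 => /eqP.
Qed.

Lemma cauchy_schwarz f g : \sum_i f i * g i <= enorm f * enorm g.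
Proof.
set a := enorm f; set b := enorm g.
have [a0|a_neq0] := eqVneq a 0.
  by rewrite a0 mul0r big1 // => i _; rewrite (enorm_eq0 a0) mul0r.
have [b0|b_neq0] := eqVneq b 0.
  by rewrite b0 mulr0 big1 // => i _; rewrite (enorm_eq0 b0) mulr0.
have ab_gt0 : 0 < a * b by rewrite mulr_gt0 // lt_def ?a_neq0 ?b_neq0 enorm_ge0.
have amgm i : 2 * (a * b) * (f i * g i) <= b ^+ 2 * f i ^+ 2 + a ^+ 2 * g i ^+ 2.
  by have := sqr_ge0 (b * f i - a * g i); nra.
have := ler_sum (index_enum I) (P := xpredT) (fun i _ => amgm i).
rewrite -mulr_sumr big_split /= -!mulr_sumr -!enorm_sqr -/a -/b => sum_amgm.
have two_ab_gt0 : 0 < 2 * (a * b) by rewrite mulr_gt0.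
by rewrite -(ler_pM2l two_ab_gt0); nra.
Qed.

Lemma enormD f g : enorm (fun i => f i + g i) <= enorm f + enorm g.
Proof.
rewrite -(ler_pXn2r (_ : 0 < 2)%N) ?nnegrE ?addr_ge0 ?enorm_ge0 //.
have -> : enorm (fun i => f i + g i) ^+ 2
          = enorm f ^+ 2 + enorm g ^+ 2 + (\sum_i f i * g i) *+ 2.
  rewrite !enorm_sqr -sumrMnl -!big_split /=; apply: eq_bigr => i _; ring.
by have := cauchy_schwarz f g; lra.
Qed.

Lemma enormZ a f : enorm (fun i => a * f i) = `|a| * enorm f.
Proof.
rewrite /enorm -sqrtr_sqr -sqrtrM ?sqr_ge0 // mulr_sumr.
by congr Num.sqrt; apply: eq_bigr => i _; rewrite exprMn.
Qed.

End EuclideanNorm.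

Section Holder.
Variable R : realType.

Lemma powRV (x r : R) : 0 <= x -> powR x^-1 r = (powR x r)^-1.
Proof. by move=> x_ge0; rewrite -powR_inv1 // -powRrM mulN1r powRN. Qed.

(* Young's inequality applied to [b_i / M] and [K^-(1 - 1/r)], where
   [M] is the r-norm of [b] on [S] and [K = #|S|], then summed over [S]. *)
Lemma holder_card_sum (I : finType) (S : {pred I}) (b : I -> R) (r : R) :
  1 < r -> (forall i, 0 <= b i) ->
  \sum_(i in S) b i <= powR #|S|%:R (1 - r^-1) * powR (\sum_(i in S) powR (b i) r) r^-1.
Proof.
move=> r_gt1 b_ge0; have r_gt0 : 0 < r by lra.
set Sig := \sum_(i in S) powR (b i) r.
have [Sig0|Sig_neq0] := eqVneq Sig 0.
  rewrite big1 ?mulr_ge0 ?powR_ge0 // => i Si.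
  move/eqP: Sig0; rewrite psumr_eq0 => [|j _]; last exact: powR_ge0.
  by move/allP/(_ i (mem_index_enum i)); rewrite Si powR_eq0 => /andP[/eqP].
have Sig_gt0 : 0 < Sig by rewrite lt_def Sig_neq0 sumr_ge0 // => i _; apply: powR_ge0.
have K_gt0 : 0 < #|S|%:R :> R.
  rewrite ltr0n lt0n; apply: contra Sig_neq0 => /eqP/card0_eq S0.
  by rewrite /Sig big_pred0.
set K : R := #|S|%:R in K_gt0 *; set M := powR Sig r^-1; set s := 1 - r^-1.
have M_gt0 : 0 < M by apply: powR_gt0.
have MrE : powR M r = Sig by rewrite -powRrM mulVf ?gt_eqF // powRr1 // ltW.
have s_gt0 : 0 < s by rewrite subr_gt0 invf_lt1.
set c := powR K s; have c_gt0 : 0 < c by apply: powR_gt0.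
have young i : b i * M^-1 * c^-1 <= powR (b i) r * Sig^-1 / r + K^-1 / s^-1.
  have rs : r^-1 + s^-1^-1 = 1 by rewrite invrK /s; ring.
  have Mi_ge0 : 0 <= M^-1 by rewrite invr_ge0 ltW.
  have ci_ge0 : 0 <= c^-1 by rewrite invr_ge0 ltW.
  have := conjugate_powR (mulr_ge0 (b_ge0 i) Mi_ge0) ci_ge0 r_gt0 _ rs.
  rewrite invr_gt0 s_gt0 powRM // => /(_ isT).
  rewrite (powRV _ (ltW M_gt0)) (powRV _ (ltW c_gt0)) MrE -powRrM mulfV ?gt_eqF //.
  by rewrite powRr1 // ltW.
have := ler_sum (index_enum I) (P := fun i => i \in S) (fun i _ => young i).
rewrite big_split /= -!mulr_suml sumr_const -/Sig -mulr_natr -/K.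
rewrite mulfV ?gt_eqF // mulVf ?gt_eqF // invrK.
have -> : 1 / r + 1 * s = 1 by rewrite /s; field; rewrite gt_eqF.
by rewrite -mulrA -invfM ler_pdivrMr ?mulr_gt0 // mul1r mulrC.
Qed.

End Holder.

Section BlockNorms.
Variables (R : realType) (p n : nat).
Implicit Types (x y h : 'cV[R]_(p * n)) (q : \bar R).

Lemma bnormE x i : bnorm x i = enorm (fun j => x (bidx i j) 0).
Proof. by []. Qed.

Lemma bnorm_ge0 x i : 0 <= bnorm x i.
Proof. exact: sqrtr_ge0. Qed.

Lemma bnorm0 i : bnorm (0 : 'cV[R]_(p * n)) i = 0.
Proof. by rewrite /bnorm big1 ?sqrtr0 // => j _; rewrite mxE expr0n. Qed.

Lemma bnormD x y i : bnorm (x + y) i <= bnorm x i + bnorm y i.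
Proof.
rewrite !bnormE (_ : (fun j => _) = fun j => x (bidx i j) 0 + y (bidx i j) 0).
  exact: enormD.
by apply: funext => j; rewrite mxE.
Qed.

Lemma bnormZ a x i : bnorm (a *: x) i = `|a| * bnorm x i.
Proof. by rewrite !bnormE -enormZ; congr enorm; apply: funext => j; rewrite mxE. Qed.

Lemma bnormN x i : bnorm (- x) i = bnorm x i.
Proof. by rewrite -scaleN1r bnormZ normrN1 mul1r. Qed.

Lemma bnormB x y i : bnorm (x - y) i <= bnorm x i + bnorm y i.
Proof. by rewrite -(bnormN y); apply: bnormD. Qed.

Lemma bnorm_gt0_block h : h != 0 -> exists i, 0 < bnorm h i.
Proof.
move=> h_neq0; have [k hk_neq0] : exists k, h k 0 != 0.
  apply/not_existsP => h0; move/eqP: h_neq0; apply; apply/matrixP => k j.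
  by rewrite ord1 mxE; have := h0 k; case: (h k 0 =P 0).
exists (Ordinal (bidx_divn_lt k)); rewrite lt_def bnorm_ge0 andbT.
apply/eqP => /enorm_eq0 /(_ (Ordinal (bidx_modn_lt k))).
by rewrite bidx_divn_modn => /eqP; rewrite (negbTE hk_neq0).
Qed.

Lemma mnorm1_ge0 x : 0 <= mnorm1 x.
Proof. by apply: sumr_ge0 => i _; apply: bnorm_ge0. Qed.

Lemma mnorm1D x y : mnorm1 (x + y) <= mnorm1 x + mnorm1 y.
Proof. by rewrite /mnorm1 -big_split /=; apply: ler_sum => i _; apply: bnormD. Qed.

Lemma mnorm1Z a x : mnorm1 (a *: x) = `|a| * mnorm1 x.
Proof. by rewrite /mnorm1 mulr_sumr; apply: eq_bigr => i _; rewrite bnormZ. Qed.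

Lemma mnorm1N x : mnorm1 (- x) = mnorm1 x.
Proof. by apply: eq_bigr => i _; rewrite bnormN. Qed.

Lemma mnorminf_ge0 x : 0 <= mnorminf x.
Proof.
by rewrite /mnorminf; elim/big_ind: _ => // [a b a0 b0|i _];
  rewrite ?le_max ?a0 ?bnorm_ge0.
Qed.

Lemma bnorm_le_mnorminf x i : bnorm x i <= mnorminf x.
Proof. by rewrite /mnorminf (bigD1 i) //= le_max lexx. Qed.

Lemma mnorminf_le x c : 0 <= c -> (forall i, bnorm x i <= c) -> mnorminf x <= c.
Proof.
by move=> c_ge0 x_le; rewrite /mnorminf; elim/big_ind: _ => // a b a_le b_le;
  rewrite ge_max a_le b_le.
Qed.

Lemma mnorm_ge0 q x : 0 <= mnorm q x.
Proof. by case: q => [r||] /=; rewrite ?powR_ge0 ?mnorminf_ge0. Qed.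

Lemma mnorm_gt0 q h : (0 < q)%E -> h != 0 -> 0 < mnorm q h.
Proof.
move=> q_gt0 /bnorm_gt0_block[i hi_gt0].
case: q q_gt0 => [r||] //= r_gt0; last exact: lt_le_trans (bnorm_le_mnorminf h i).
apply/powR_gt0/(lt_le_trans (powR_gt0 r hi_gt0)).
by rewrite (bigD1 i) //= lerDl sumr_ge0 // => j _; apply: powR_ge0.
Qed.

Lemma mnorm_zero q : (0 < q)%E -> mnorm q (0 : 'cV[R]_(p * n)) = 0.
Proof.
case: q => [r||] //= r_gt0; last first.
  by apply/le_anti; rewrite mnorminf_ge0 mnorminf_le // => i; rewrite bnorm0.
rewrite big1 ?powR0 ?invr_eq0 ?gt_eqF // => i _.
by rewrite bnorm0 powR0 // gt_eqF.
Qed.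

Lemma qexp_gt0 q : (1 < q)%E -> 0 < qcexp q.
Proof.
by case: q => [r||] //=; rewrite ?ltr01 // lte_fin => r_gt1; rewrite divr_gt0; lra.
Qed.

Lemma qexp_conj q : (1 < q)%E -> (1 - qinvexp q) * qcexp q = 1.
Proof.
case: q => [r||] //=; last by rewrite subr0 mul1r.
rewrite lte_fin => r_gt1.
by field; rewrite !gt_eqF // ?subr_gt0; lra.
Qed.

Lemma holder_blocks q (S : {pred 'I_p}) h : (1 < q)%E ->
  \sum_(i in S) bnorm h i <= powR #|S|%:R (1 - qinvexp q) * mnorm q h.
Proof.
case: q => [r||] //=; last first.
  move=> _; rewrite subr0 powRr1 // -sumr_const mulr_suml.
  by apply: ler_sum => i _; rewrite mul1r bnorm_le_mnorminf.
rewrite lte_fin => r_gt1.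
apply: le_trans (holder_card_sum S r_gt1 (bnorm_ge0 h)) _.
rewrite ler_wpM2l ?powR_ge0 // ge0_ler_powR ?nnegrE ?invr_ge0 ?sumr_ge0 //;
  try by [lra | move=> i _; apply: powR_ge0].
by rewrite [leRHS](bigID S) /= lerDl sumr_ge0 // => i _; apply: powR_ge0.
Qed.

Lemma kq_le q (k : nat) a h : (1 < q)%E -> 0 < a -> h != 0 ->
  mnorm1 h <= a * powR k%:R (1 - qinvexp q) * mnorm q h ->
  kq q h <= powR a (qcexp q) * k%:R.
Proof.
move=> q_gt1 a_gt0 h_neq0 h_le.
have t_gt0 : 0 < mnorm q h by rewrite mnorm_gt0 // (lt_trans _ q_gt1).
have -> : powR a (qcexp q) * k%:R = powR (a * powR k%:R (1 - qinvexp q)) (qcexp q).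
  by rewrite powRM ?powR_ge0 ?ltW // -powRrM qexp_conj // powRr1.
apply: ge0_ler_powR; rewrite ?nnegrE ?divr_ge0 ?mulr_ge0 ?powR_ge0 ?mnorm1_ge0
  ?mnorm_ge0 ?(ltW a_gt0) ?(ltW (qexp_gt0 q_gt1)) //.
by rewrite ler_pdivrMr.
Qed.

End BlockNorms.

Section InnerProduct.
Variable R : realType.

Definition dotv (N : nat) (u v : 'cV[R]_N) : R := \sum_k u k 0 * v k 0.

Lemma l2normE m (v : 'cV[R]_m) : l2norm v = enorm (fun i => v i 0).
Proof. by []. Qed.

Lemma l2norm_ge0 m (v : 'cV[R]_m) : 0 <= l2norm v.
Proof. exact: sqrtr_ge0. Qed.

Lemma l2norm_sqr m (v : 'cV[R]_m) : l2norm v ^+ 2 = dotv v v.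
Proof. by rewrite l2normE enorm_sqr; apply: eq_bigr => i _; rewrite expr2. Qed.

Lemma l2normD m (u v : 'cV[R]_m) : l2norm (u + v) <= l2norm u + l2norm v.
Proof.
rewrite !l2normE (_ : (fun i => _) = fun i => u i 0 + v i 0); first exact: enormD.
by apply: funext => i; rewrite mxE.
Qed.

Lemma l2normN m (v : 'cV[R]_m) : l2norm (- v) = l2norm v.
Proof. by rewrite /l2norm; congr Num.sqrt; apply: eq_bigr => i _; rewrite mxE sqrrN. Qed.

Lemma dotvC m (u v : 'cV[R]_m) : dotv u v = dotv v u.
Proof. by apply: eq_bigr => i _; rewrite mulrC. Qed.

Lemma dotvDl m (u v w : 'cV[R]_m) : dotv (u + v) w = dotv u w + dotv v w.
Proof. by rewrite /dotv -big_split; apply: eq_bigr => i _; rewrite mxE mulrDl. Qed.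

Lemma dotvZl m a (u w : 'cV[R]_m) : dotv (a *: u) w = a * dotv u w.
Proof. by rewrite /dotv mulr_sumr; apply: eq_bigr => i _; rewrite mxE mulrA. Qed.

Lemma dotvNl m (u w : 'cV[R]_m) : dotv (- u) w = - dotv u w.
Proof. by rewrite -scaleN1r dotvZl mulN1r. Qed.

Lemma dotvDr m (u v w : 'cV[R]_m) : dotv w (u + v) = dotv w u + dotv w v.
Proof. by rewrite dotvC dotvDl !(dotvC w). Qed.

Lemma dotvZr m a (u w : 'cV[R]_m) : dotv w (a *: u) = a * dotv w u.
Proof. by rewrite dotvC dotvZl dotvC. Qed.

Lemma dotv_mulmx m N (A : 'M[R]_(m, N)) (h : 'cV[R]_N) (w : 'cV[R]_m) :
  dotv (A *m h) w = dotv h (A^T *m w).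
Proof.
rewrite /dotv; under eq_bigr do rewrite mxE mulr_suml.
rewrite exchange_big; apply: eq_bigr => j _.
by rewrite mxE mulr_sumr; apply: eq_bigr => i _; rewrite mxE mulrCA mulrA.
Qed.

Lemma dotv_le_mnorm1_mnorminf p n (h w : 'cV[R]_(p * n)) :
  dotv h w <= mnorm1 h * mnorminf w.
Proof.
rewrite /dotv big_bidx /mnorm1 mulr_suml; apply: ler_sum => i _.
apply: le_trans (cauchy_schwarz _ _) _.
by rewrite -!bnormE ler_wpM2l ?bnorm_ge0 ?bnorm_le_mnorminf.
Qed.

End InnerProduct.

Section SparseApproximation.
Variables (R : realType) (p n : nat).
Implicit Types (x z h : 'cV[R]_(p * n)) (q : \bar R).

Lemma bnorm_off_support x z i : blk z i = 0 -> bnorm x i = bnorm (x - z) i.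
Proof.
move=> zi0; rewrite /bnorm; congr Num.sqrt; apply: eq_bigr => j _.
by have := congr1 (fun v : 'rV[R]_n => v 0 j) zi0; rewrite !mxE => ->; rewrite subr0.
Qed.

Lemma mnorm1_cone (S : pred 'I_p) x h z : (forall i, ~~ S i -> blk z i = 0) ->
  mnorm1 x - mnorm1 (x + h) <=
  \sum_(i | S i) bnorm h i - \sum_(i | ~~ S i) bnorm h i + 2 * mnorm1 (x - z).
Proof.
move=> z_off_S; rewrite /mnorm1 -sumrB (bigID S) /=.
have on_S : \sum_(i | S i) (bnorm x i - bnorm (x + h) i) <= \sum_(i | S i) bnorm h i.
  by apply: ler_sum => i _; have := bnormB (x + h) h i; rewrite addrK; lra.
have off_S : \sum_(i | ~~ S i) (bnorm x i - bnorm (x + h) i)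
             <= 2 * \sum_(i | ~~ S i) bnorm (x - z) i - \sum_(i | ~~ S i) bnorm h i.
  rewrite mulr_sumr -sumrB; apply: ler_sum => i /z_off_S/(bnorm_off_support x) xiE.
  by have := bnormB (x + h) x i; rewrite addrC addKr -xiE; lra.
have tail : \sum_(i | ~~ S i) bnorm (x - z) i <= \sum_i bnorm (x - z) i.
  by rewrite [leRHS](bigID S) /= lerDr sumr_ge0 // => i _; apply: bnorm_ge0.
lra.
Qed.

Lemma mnorm1_sparse_cone q (k : nat) kap x h z : (1 < q)%E -> mnorm0 z = k ->
  mnorm1 (x + h) - mnorm1 x <= kap * mnorm1 h ->
  (1 - kap) * mnorm1 h <= 2 * powR k%:R (1 - qinvexp q) * mnorm q h + 2 * mnorm1 (x - z).
Proof.
move=> q_gt1 zk cone_h; set S := fun i => blk z i != 0.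
have z_off_S i : ~~ S i -> blk z i = 0 by move/negbNE/eqP.
have := @mnorm1_cone S x h z z_off_S.
have holder_S : \sum_(i | S i) bnorm h i <= powR k%:R (1 - qinvexp q) * mnorm q h.
  by rewrite -zk; apply: holder_blocks.
have split_h : mnorm1 h = \sum_(i | S i) bnorm h i + \sum_(i | ~~ S i) bnorm h i.
  by rewrite /mnorm1 (bigID S).
lra.
Qed.

Lemma exists_mnorm0 (k : nat) : (0 < n)%N -> (k <= p)%N ->
  exists z : 'cV[R]_(p * n), mnorm0 z = k.
Proof.
move=> n_gt0 k_le_p; exists (\col_l ((l < k * n)%N%:R)).
have blk_lt (i : 'I_p) : (blk (\col_l ((l < k * n)%N%:R)) i != 0 :> 'rV[R]_n) = (i < k)%N.
  have [i_lt_k | k_le_i] := ltnP i k.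
    apply/eqP => /(congr1 (fun v : 'rV[R]_n => v 0 (Ordinal n_gt0))).
    have lt_kn : (i * n + 0 < k * n)%N by nia.
    by rewrite !mxE /= lt_kn => /eqP; rewrite oner_eq0.
  apply/negbTE/negPn/eqP/rowP => j; rewrite !mxE /=.
  by rewrite (_ : i * n + j < k * n = false)%N //; have := ltn_ord j; nia.
have widen_inj : injective (widen_ord k_le_p).
  by move=> a b /(congr1 val) ab; apply: val_inj.
rewrite /mnorm0 -[RHS]card_ord -(card_codom widen_inj); apply: eq_card => i.
rewrite inE blk_lt; apply/idP/codomP => [i_lt_k | [j ->]].
  by exists (Ordinal i_lt_k); apply: val_inj.
by rewrite /= ltn_ord.
Qed.

Lemma betaqs_le q s m (A : 'M[R]_(m, p * n)) h : (0 < q)%E -> h != 0 -> kq q h <= s ->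
  betaqs q s A * mnorm q h <= l2norm (A *m h).
Proof.
move=> q_gt0 h_neq0 kq_le_s; rewrite -ler_pdivlMr ?mnorm_gt0 //.
apply: ge_inf; last by exists h.
by exists 0 => _ [z _ <-]; rewrite divr_ge0 ?l2norm_ge0 ?mnorm_ge0.
Qed.

Lemma betaqs_gt0_lt0n q s m (A : 'M[R]_(m, p * n)) : 0 < betaqs q s A -> (0 < n)%N.
Proof.
rewrite lt0n; apply: contraTneq => n0; rewrite /betaqs.
suff -> : [set l2norm (A *m z) / mnorm q z
          | z in [set z : 'cV[R]_(p * n) | z != 0 /\ kq q z <= s]]%classic = set0.
  by rewrite inf0 ltxx.
apply/seteqP; split => // y [z [z_neq0 _] _].
have [i] := bnorm_gt0_block z_neq0.
rewrite /bnorm big1 ?sqrtr0 ?ltxx // => j _.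
by move: (ltn_ord j); rewrite [in X in (_ < X)%N]n0.
Qed.

End SparseApproximation.

Section ErrorBounds.
Variables (R : realType) (p n : nat).

Lemma le_addr_mul_inf (T : Type) (P : set T) (f : T -> R) a b C :
  0 < C -> (exists u, P u) -> (forall u, P u -> a <= b + C * f u) ->
  a <= b + C * inf [set f u | u in P]%classic.
Proof.
move=> C_gt0 [u0 Pu0] le_f; rewrite -lerBlDl -ler_pdivrMl //.
apply: lb_le_inf; first by exists (f u0), u0.
by move=> _ [u Pu <-]; rewrite ler_pdivrMl // lerBlDl le_f.
Qed.

Lemma mnorm_error_bounds (q : \bar R) (k : nat) (x h : 'cV[R]_(p * n)) (kap X : R) :
  (1 <= k <= p)%N -> (1 < q)%E -> kap < 1 -> 0 <= X -> (0 < n)%N ->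
  mnorm1 (x + h) - mnorm1 x <= kap * mnorm1 h ->
  (h != 0 -> kq q h <= powR (4 / (1 - kap)) (qcexp q) * k%:R ->
     mnorm1 h <= 4 / (1 - kap) * powR k%:R (1 - qinvexp q) * mnorm q h ->
     mnorm q h <= X) ->
  mnorm q h <= X + powR k%:R (qinvexp q - 1) * phik k x /\
  mnorm1 h <= (1 - kap)^-1 * (2 * powR k%:R (1 - qinvexp q) * X)
              + 4 / (1 - kap) * phik k x.
Proof.
move=> /andP[k_ge1 k_le_p] q_gt1 kap_lt1 X_ge0 n_gt0 cone_h small_bound.
set c := powR k%:R (1 - qinvexp q).
have c_gt0 : 0 < c by rewrite powR_gt0 // ltr0n.
have -> : powR k%:R (qinvexp q - 1) = c^-1 by rewrite -powRN opprB.
have a_gt0 : 0 < 4 / (1 - kap) by rewrite divr_gt0 // subr_gt0.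
have bounds_z z : mnorm0 z = k ->
    mnorm q h <= X + c^-1 * mnorm1 (x - z) /\
    mnorm1 h <= (1 - kap)^-1 * (2 * c * X) + 4 / (1 - kap) * mnorm1 (x - z).
  move=> zk; apply: cone_dichotomy; rewrite ?mnorm1_ge0 //.
    exact: mnorm1_sparse_cone.
  have [->|h_neq0] := eqVneq h 0; first by rewrite mnorm_zero // (lt_trans _ q_gt1).
  by move=> T_le; apply: small_bound => //; rewrite kq_le // mulrA.
have [z0 z0k] := exists_mnorm0 R n_gt0 k_le_p.
split; apply: le_addr_mul_inf; rewrite ?invr_gt0 //; try by exists z0.
  by move=> z /bounds_z[].
by move=> z /bounds_z[].
Qed.

End ErrorBounds.

Section Estimators.
Variables (R : realType) (m p n : nat) (A : 'M[R]_(m, p * n)).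
Variables (x : 'cV[R]_(p * n)) (eps : 'cV[R]_m).

Lemma residual_true_signal : A *m x + eps - A *m x = eps.
Proof. by rewrite addrC addKr. Qed.

Lemma residual_estimate xh : A *m x + eps - A *m xh = eps - A *m (xh - x).
Proof. by rewrite mulmxBr opprB addrAC addrC. Qed.

Lemma bbp_error (k : nat) (q : \bar R) (zeta : R) :
  (1 <= k <= p)%N -> (1 < q)%E -> 0 <= zeta ->
   l2norm eps <= zeta ->
   forall xh, bbp_solution A (A *m x + eps) zeta xh ->
   0 < betaqs q (powR 4 (qcexp q) * k%:R) A ->
     mnorm q (xh - x) <= 2 * zeta / betaqs q (powR 4 (qcexp q) * k%:R) A
                         + powR k%:R (qinvexp q - 1) * phik k x
     /\ mnorm1 (xh - x) <= 4 * powR k%:R (1 - qinvexp q) * zeta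
                             / betaqs q (powR 4 (qcexp q) * k%:R) A
                           + 4 * phik k x.
Proof.
move=> k_range q_gt1 zeta_ge0 eps_le xh [xh_feas xh_opt] beta_gt0.
set b := betaqs _ _ A in beta_gt0 *; set h := xh - x.
have cone_h : mnorm1 (x + h) - mnorm1 x <= 0 * mnorm1 h.
  by rewrite mul0r subr_le0 addrC subrK xh_opt // residual_true_signal.
have X_ge0 : 0 <= 2 * zeta / b by rewrite divr_ge0 ?mulr_ge0 // ltW.
have [] := mnorm_error_bounds k_range q_gt1 ltr01 X_ge0 (betaqs_gt0_lt0n beta_gt0) cone_h.
  rewrite subr0 divr1 => h_neq0 kq_h _.
  rewrite ler_pdivlMr // mulrC.
  have q_gt0 : (0 < q)%E by apply: lt_trans q_gt1.
  apply: le_trans (betaqs_le A q_gt0 h_neq0 kq_h) _.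
  have := l2normD eps (- (A *m x + eps - A *m xh)).
  rewrite l2normN residual_estimate subKr.
  by rewrite residual_estimate in xh_feas; lra.
move=> t_le; rewrite subr0 invr1 mul1r mulr1 => T_le; split => //.
set c := powR k%:R _ in T_le *.
by rewrite (_ : 4 * c * zeta / b = 2 * c * (2 * zeta / b)) //; ring.
Qed.

Lemma bds_gram_bound xh (mu : R) :
  mnorminf (A^T *m eps) <= mu -> mnorminf (A^T *m (A *m x + eps - A *m xh)) <= mu ->
  mnorminf (A^T *m (A *m (xh - x))) <= 2 * mu.
Proof.
move=> eps_le xh_feas; have mu_ge0 := le_trans (mnorminf_ge0 _) eps_le.
rewrite (_ : A *m (xh - x) = eps - (A *m x + eps - A *m xh)); last first.
  by rewrite residual_estimate subKr.
rewrite mulmxBr mnorminf_le ?mulr_ge0 // => i.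
apply: le_trans (bnormB _ _ _) _.
have := bnorm_le_mnorminf (A^T *m eps) i.
by have := bnorm_le_mnorminf (A^T *m (A *m x + eps - A *m xh)) i; lra.
Qed.

Lemma bds_error (k : nat) (q : \bar R) (mu : R) :
  (1 <= k <= p)%N -> (1 < q)%E -> 0 < mu ->
   mnorminf (A^T *m eps) <= mu ->
   forall xh, bds_solution A (A *m x + eps) mu xh ->
   0 < betaqs q (powR 4 (qcexp q) * k%:R) A ->
     mnorm q (xh - x) <= 8 * powR k%:R (1 - qinvexp q)
                           / betaqs q (powR 4 (qcexp q) * k%:R) A ^+ 2 * mu
                         + powR k%:R (qinvexp q - 1) * phik k x
     /\ mnorm1 (xh - x) <= 16 * powR k%:R (2 - 2 * qinvexp q)
                             / betaqs q (powR 4 (qcexp q) * k%:R) A ^+ 2 * mu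
                           + 4 * phik k x.
Proof.
move=> k_range q_gt1 mu_gt0 eps_le xh [xh_feas xh_opt] beta_gt0.
have gram := bds_gram_bound eps_le xh_feas.
set b := betaqs _ _ A in beta_gt0 *; set h := xh - x in gram *.
set c := powR k%:R (1 - qinvexp q).
have cone_h : mnorm1 (x + h) - mnorm1 x <= 0 * mnorm1 h.
  by rewrite mul0r subr_le0 addrC subrK xh_opt // residual_true_signal.
have c_gt0 : 0 < c by rewrite powR_gt0 // ltr0n; case/andP: k_range.
have X_ge0 : 0 <= 8 * c / b ^+ 2 * mu by rewrite !mulr_ge0 ?invr_ge0 ?exprn_ge0 ?ltW.
have [] := mnorm_error_bounds k_range q_gt1 ltr01 X_ge0 (betaqs_gt0_lt0n beta_gt0) cone_h.
  rewrite subr0 divr1 => h_neq0 kq_h T_le.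
  have q_gt0 : (0 < q)%E by apply: lt_trans q_gt1.
  rewrite mulrAC; apply: (le_div_sqr_of_quadratic beta_gt0 (mnorm_gt0 q_gt0 h_neq0)).
    exact: betaqs_le.
  rewrite l2norm_sqr dotv_mulmx; apply: le_trans (dotv_le_mnorm1_mnorminf _ _) _.
  apply: le_trans (ler_wpM2l (mnorm1_ge0 h) gram) _.
  by have := ler_wpM2l (ltW mu_gt0) T_le; rewrite -/c; lra.
move=> t_le; rewrite subr0 invr1 mul1r mulr1 => T_le; split => //.
have -> : 2 - 2 * qinvexp q = (1 - qinvexp q) * 2%:R by ring.
rewrite powRrM powR_mulrn ?powR_ge0 // -/c.
by rewrite (_ : 16 * c ^+ 2 / b ^+ 2 * mu = 2 * c * (8 * c / b ^+ 2 * mu)) //; ring.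
Qed.

(* First-order optimality along the segment from [xh] towards [x]: comparing
   the objective at [xh - l *: (xh - x)] and letting [l] tend to [0]. *)
Lemma glasso_basic_inequality (mu : R) xh : 0 < mu ->
  glasso_solution A (A *m x + eps) mu xh ->
  mu * (mnorm1 xh - mnorm1 x)
  <= dotv (xh - x) (A^T *m eps) - l2norm (A *m (xh - x)) ^+ 2.
Proof.
move=> mu_gt0 xh_opt; have rE := residual_estimate xh.
set r := A *m x + eps - A *m xh in rE *; set h := xh - x in rE *.
set N2 := l2norm (A *m h) ^+ 2; set G := dotv h (A^T *m eps).
have r_Ah : dotv r (A *m h) = G - N2.
  by rewrite rE dotvDl dotvNl /N2 l2norm_sqr dotvC dotv_mulmx.
apply: (@le_of_le_add_small _ _ _ (2^-1 * N2)).
  by rewrite mulr_ge0 ?invr_ge0 ?exprn_ge0 ?l2norm_ge0.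
move=> l l_gt0 l_le1.
have res_l : A *m x + eps - A *m (xh - l *: h) = r + l *: (A *m h).
  by rewrite /r mulmxBr -scalemxAr; apply/matrixP => i j; rewrite !mxE; ring.
have sqr_l : l2norm (r + l *: (A *m h)) ^+ 2
              = l2norm r ^+ 2 + 2 * l * (G - N2) + l ^+ 2 * N2.
  have N2E : N2 = dotv (A *m h) (A *m h) by rewrite /N2 l2norm_sqr.
  clearbody r h G N2; rewrite !l2norm_sqr dotvDl !dotvDr !dotvZl !dotvZr.
  by rewrite [dotv (A *m h) r]dotvC r_Ah -N2E; ring.
have convex_l : mnorm1 (xh - l *: h) <= (1 - l) * mnorm1 xh + l * mnorm1 x.
  rewrite (_ : xh - l *: h = (1 - l) *: xh + l *: x); last first.
    by apply/matrixP => i j; rewrite !mxE; ring.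
  by apply: le_trans (mnorm1D _ _) _; rewrite !mnorm1Z !ger0_norm ?subr_ge0 // ltW.
have := xh_opt (xh - l *: h); rewrite res_l sqr_l -/r => opt_l.
have conv_mu := ler_wpM2l (ltW mu_gt0) convex_l.
by rewrite -(ler_pM2l l_gt0); lra.
Qed.

Lemma glasso_error (k : nat) (q : \bar R) (mu : R) :
  (1 <= k <= p)%N -> (1 < q)%E -> 0 < mu ->
   forall kappa, 0 < kappa < 1 ->
   mnorminf (A^T *m eps) <= kappa * mu ->
   forall xh, glasso_solution A (A *m x + eps) mu xh ->
   0 < betaqs q (powR (4 / (1 - kappa)) (qcexp q) * k%:R) A ->
     mnorm q (xh - x) <= (1 + kappa) / (1 - kappa)
                         * (4 * powR k%:R (1 - qinvexp q)
                            / betaqs q (powR (4 / (1 - kappa)) (qcexp q) * k%:R) A ^+ 2)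
                         * mu
                         + powR k%:R (qinvexp q - 1) * phik k x
     /\ mnorm1 (xh - x) <= (1 + kappa) / (1 - kappa) ^+ 2
                           * (8 * powR k%:R (2 - 2 * qinvexp q)
                              / betaqs q (powR (4 / (1 - kappa)) (qcexp q) * k%:R) A ^+ 2)
                           * mu
                           + 4 / (1 - kappa) * phik k x.
Proof.
move=> k_range q_gt1 mu_gt0 kap /andP[kap_gt0 kap_lt1] eps_le xh xh_opt beta_gt0.
have basic := glasso_basic_inequality mu_gt0 xh_opt.
set b := betaqs _ _ A in beta_gt0 *; set h := xh - x in basic *.
set c := powR k%:R (1 - qinvexp q).
have c_gt0 : 0 < c by rewrite powR_gt0 // ltr0n; case/andP: k_range.
have N2_ge0 : 0 <= l2norm (A *m h) ^+ 2 by rewrite exprn_ge0 ?l2norm_ge0.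
have G_le : dotv h (A^T *m eps) <= mnorm1 h * (kap * mu).
  exact: le_trans (dotv_le_mnorm1_mnorminf _ _) (ler_wpM2l (mnorm1_ge0 h) eps_le).
have xhE : xh = x + h by rewrite addrC subrK.
have cone_h : mnorm1 (x + h) - mnorm1 x <= kap * mnorm1 h.
  by rewrite -xhE -(ler_pM2l mu_gt0); lra.
have N2_le : l2norm (A *m h) ^+ 2 <= (1 + kap) * mu * mnorm1 h.
  have := mnorm1D xh (- h); rewrite mnorm1N {1}xhE addrK => x_le.
  by have := ler_wpM2l (ltW mu_gt0) x_le; lra.
have X_ge0 : 0 <= (1 + kap) / (1 - kap) * (4 * c / b ^+ 2) * mu.
  by rewrite !mulr_ge0 ?invr_ge0 ?exprn_ge0 ?subr_ge0 ?ltW //; lra.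
have n_gt0 := betaqs_gt0_lt0n beta_gt0.
have [] := mnorm_error_bounds k_range q_gt1 kap_lt1 X_ge0 n_gt0 cone_h.
  move=> h_neq0 kq_h T_le; have q_gt0 : (0 < q)%E by apply: lt_trans q_gt1.
  rewrite (_ : _ * mu = (1 + kap) * mu * (4 / (1 - kap) * c) / b ^+ 2); last by ring.
  apply: (le_div_sqr_of_quadratic beta_gt0 (mnorm_gt0 q_gt0 h_neq0)).
    exact: betaqs_le.
  have mu_kap_ge0 : 0 <= (1 + kap) * mu by rewrite mulr_ge0 ?ltW //; lra.
  by have := ler_wpM2l mu_kap_ge0 T_le; rewrite -/c; lra.
move=> t_le T_le; split => //.
have -> : 2 - 2 * qinvexp q = (1 - qinvexp q) * 2%:R by ring.
rewrite powRrM powR_mulrn ?powR_ge0 // -/c.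
rewrite (_ : (1 + kap) / (1 - kap) ^+ 2 * (8 * c ^+ 2 / b ^+ 2) * mu
             = (1 - kap)^-1
               * (2 * c * ((1 + kap) / (1 - kap) * (4 * c / b ^+ 2) * mu))) //.
by rewrite -exprVn; ring.
Qed.

End Estimators.

Theorem theorem2 (R : realType) (m p n : nat) (A : 'M[R]_(m, p * n))
    (x : 'cV[R]_(p * n)) (eps : 'cV[R]_m) (k : nat) (q : \bar R)
    (zeta mu : R) :
  (1 <= k <= p)%N -> (1 < q)%E -> 0 <= zeta -> 0 < mu ->
  [/\
   (* 1) block basis pursuit *)
   l2norm eps <= zeta ->
   forall xh, bbp_solution A (A *m x + eps) zeta xh ->
   0 < betaqs q (powR 4 (qcexp q) * k%:R) A ->
     mnorm q (xh - x) <= 2 * zeta / betaqs q (powR 4 (qcexp q) * k%:R) A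
                         + powR k%:R (qinvexp q - 1) * phik k x
     /\ mnorm1 (xh - x) <= 4 * powR k%:R (1 - qinvexp q) * zeta
                             / betaqs q (powR 4 (qcexp q) * k%:R) A
                           + 4 * phik k x,
   (* 2) block Dantzig selector *)
   mnorminf (A^T *m eps) <= mu ->
   forall xh, bds_solution A (A *m x + eps) mu xh ->
   0 < betaqs q (powR 4 (qcexp q) * k%:R) A ->
     mnorm q (xh - x) <= 8 * powR k%:R (1 - qinvexp q)
                           / betaqs q (powR 4 (qcexp q) * k%:R) A ^+ 2 * mu
                         + powR k%:R (qinvexp q - 1) * phik k x
     /\ mnorm1 (xh - x) <= 16 * powR k%:R (2 - 2 * qinvexp q)
                             / betaqs q (powR 4 (qcexp q) * k%:R) A ^+ 2 * mu
                           + 4 * phik k x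
   &
   (* 3) group lasso *)
   forall kappa, 0 < kappa < 1 ->
   mnorminf (A^T *m eps) <= kappa * mu ->
   forall xh, glasso_solution A (A *m x + eps) mu xh ->
   0 < betaqs q (powR (4 / (1 - kappa)) (qcexp q) * k%:R) A ->
     mnorm q (xh - x) <= (1 + kappa) / (1 - kappa)
                         * (4 * powR k%:R (1 - qinvexp q)
                            / betaqs q (powR (4 / (1 - kappa)) (qcexp q) * k%:R) A ^+ 2)
                         * mu
                         + powR k%:R (qinvexp q - 1) * phik k x
     /\ mnorm1 (xh - x) <= (1 + kappa) / (1 - kappa) ^+ 2
                           * (8 * powR k%:R (2 - 2 * qinvexp q)
                              / betaqs q (powR (4 / (1 - kappa)) (qcexp q) * k%:R) A ^+ 2)
                           * mu
                           + 4 / (1 - kappa) * phik k x].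
Proof.
move=> k_range q_gt1 zeta_ge0 mu_gt0; split.
- exact: bbp_error.
- exact: bds_error.
- exact: glasso_error.
Qed.
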